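(* Let $\kappa$ be an uncountable cardinal with $\kappa=\kappa^{<\kappa}$. Then there is a closed non-empty subset of ${}^\kappa\kappa$ that is not the continuous image of ${}^\kappa\kappa$ (i.e. there is no continuous function $f:{}^\kappa\kappa\to{}^\kappa\kappa$ whose range is this set).
   Context: For a cardinal $\mu$, ${}^\kappa\mu$ is the set of all functions $x:\kappa\to\mu$ and ${}^{<\kappa}\mu$ is the set of all functions $t:\alpha\to\mu$ with $\alpha<\kappa$. The space ${}^\kappa\mu$ carries the topology whose basic open sets are $N_s=\{x\in{}^\kappa\mu : s\subseteq x\}$ for $s\in{}^{<\kappa}\mu$. *)

(* The cardinal kappa is represented as a type K carrying a
   strict well-order lt of order type kappa, i.e. an initial ordinal:
   every proper initial segment has strictly smaller cardinality. *)
From Stdlib Require Import Classical.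

Definition injective {A B : Type} (f : A -> B) : Prop :=
  forall x y, f x = f y -> x = y.

Definition bijective {A B : Type} (f : A -> B) : Prop :=
  injective f /\ forall y, exists x, f x = y.

Definition is_wellorder {K : Type} (lt : K -> K -> Prop) : Prop :=
  well_founded lt
  /\ (forall a b c, lt a b -> lt b c -> lt a c)
  /\ (forall a b, lt a b \/ a = b \/ lt b a).

Definition seg {K : Type} (lt : K -> K -> Prop) (a : K) : Type :=
  { b : K | lt b a }.

Definition is_cardinal {K : Type} (lt : K -> K -> Prop) : Prop :=
  is_wellorder lt /\ forall a : K, ~ exists f : K -> seg lt a, injective f.

Definition uncountable (K : Type) : Prop :=
  ~ exists f : K -> nat, injective f.

Definition short_seqs {K : Type} (lt : K -> K -> Prop) : Type :=
  { a : K & seg lt a -> K }.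

Definition kappa_lt_kappa_eq {K : Type} (lt : K -> K -> Prop) : Prop :=
  exists f : short_seqs lt -> K, bijective f.

Definition agree_below {K : Type} (lt : K -> K -> Prop) (a : K) (x y : K -> K) : Prop :=
  forall b, lt b a -> x b = y b.

Definition kopen {K : Type} (lt : K -> K -> Prop) (U : (K -> K) -> Prop) : Prop :=
  forall x, U x -> exists a : K, forall y, agree_below lt a x y -> U y.

Definition kclosed {K : Type} (lt : K -> K -> Prop) (C : (K -> K) -> Prop) : Prop :=
  kopen lt (fun x => ~ C x).

Definition kcontinuous {K : Type} (lt : K -> K -> Prop) (f : (K -> K) -> (K -> K)) : Prop :=
  forall U, kopen lt U -> kopen lt (fun x => U (f x)).

From Stdlib Require Import Classical ClassicalEpsilon FunctionalExtensionality ProofIrrelevance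
  Eqdep List PeanoNat Lia
  Wellfounded.Inclusion Wellfounded.Inverse_Image.

(* Through the bijection kappa^{<kappa} = kappa, a point z of ^kappa kappa codes a binary
   relation on kappa; C is the closed set of codes of relations that are well-founded on
   every proper initial segment.  Given a continuous f with values in C, the pairs (a, t),
   t in ^{<kappa}kappa, ordered by "t' extends t and N_t' forces b below a in the relation
   coded by f", form a well-founded order, since cf(kappa) > omega.  For each x, sending a
   to (a, x|d) for d large enough maps the relation coded by f x rank-increasingly into this
   order.  If f were onto C, some f x would code this very order with a top element added,
   and the rank of the top would exceed itself. *)

Section WellFounded.
Context {A : Type} (R : A -> A -> Prop).

Lemma Acc_irrefl a : Acc R a -> ~ R a a.
Proof. induction 1 as [a _ IH]. intro Ha. exact (IH a Ha Ha). Qed.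

Lemma wf_no_descending_seq (s : nat -> A) :
  well_founded R -> ~ (forall n, R (s (S n)) (s n)).
Proof.
  intros Hwf Hs.
  enough (H : forall a, Acc R a -> forall n, s n <> a) by exact (H (s 0) (Hwf _) 0 eq_refl).
  induction 1 as [a _ IH]. intros n <-. exact (IH _ (Hs n) (S n) eq_refl).
Qed.

Lemma wf_of_no_descending_seq :
  (forall s : nat -> A, ~ (forall n, R (s (S n)) (s n))) -> well_founded R.
Proof.
  intros Hno a. apply NNPP. intro Ha.
  assert (Hstep : forall p, exists p', ~ Acc R p -> R p' p /\ ~ Acc R p').
  { intro p. destruct (classic (Acc R p)) as [Hp|Hp]; [exists p; tauto|].
    apply NNPP. intro Hn. apply Hp. constructor. intros p' Hp'.
    apply NNPP. intro Hp''. apply Hn. exists p'. auto. }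
  destruct (choice _ Hstep) as [next Hnext].
  pose (s := fix s n := match n with O => a | S k => next (s k) end).
  assert (Hs : forall n, ~ Acc R (s n)).
  { induction n; [exact Ha | exact (proj2 (Hnext _ IHn))]. }
  apply (Hno s). intro n. exact (proj1 (Hnext _ (Hs n))).
Qed.

Lemma wf_minimal (P : A -> Prop) :
  well_founded R -> (exists x, P x) -> exists m, P m /\ forall y, P y -> ~ R y m.
Proof.
  intros Hwf [x Hx]. apply NNPP. intro Hn.
  enough (H : forall z, Acc R z -> ~ P z) by exact (H x (Hwf x) Hx).
  induction 1 as [z _ IH]. intro Hz. apply Hn. exists z. split; [exact Hz|].
  intros y Hy Hyz. exact (IH y Hyz Hy).
Qed.

End WellFounded.

Section Rank.
Context {A : Type} (R : A -> A -> Prop).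

(* [rank_le p q] and [rank_lt p q] compare the ranks of [p] and [q] in the
   well-founded relation [R] without constructing ordinals. *)
Inductive rank_le : A -> A -> Prop :=
  rank_le_intro p q :
    (forall p', R p' p -> exists q', R q' q /\ rank_le p' q') -> rank_le p q.

Definition rank_lt (p q : A) : Prop := exists q', R q' q /\ rank_le p q'.

Lemma rank_le_inv p q :
  rank_le p q -> forall p', R p' p -> exists q', R q' q /\ rank_le p' q'.
Proof. destruct 1. assumption. Qed.

Hypothesis Rwf : well_founded R.

Lemma rank_le_refl p : rank_le p p.
Proof.
  induction p as [p IH] using (well_founded_induction Rwf).
  constructor. intros p' Hp'. exists p'. auto.
Qed.

Lemma rank_le_trans p q r : rank_le p q -> rank_le q r -> rank_le p r.
Proof.
  revert q r. induction p as [p IH] using (well_founded_induction Rwf).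
  intros q r Hpq Hqr. constructor. intros p' Hp'.
  destruct (rank_le_inv _ _ Hpq p' Hp') as [q' [Hq' Hpq']].
  destruct (rank_le_inv _ _ Hqr q' Hq') as [r' [Hr' Hqr']].
  exists r'. split; [exact Hr' | exact (IH p' Hp' q' r' Hpq' Hqr')].
Qed.

Lemma rank_le_lt_trans p q r : rank_le p q -> rank_lt q r -> rank_lt p r.
Proof.
  intros Hpq [r' [Hr' Hqr']]. exists r'. split; [exact Hr'|].
  exact (rank_le_trans _ _ _ Hpq Hqr').
Qed.

Lemma rank_lt_le_trans p q r : rank_lt p q -> rank_le q r -> rank_lt p r.
Proof.
  intros [q' [Hq' Hpq']] Hqr. destruct (rank_le_inv _ _ Hqr q' Hq') as [r' [Hr' Hqr']].
  exists r'. split; [exact Hr'|]. exact (rank_le_trans _ _ _ Hpq' Hqr').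
Qed.

Lemma rank_lt_of_rel p q : R p q -> rank_lt p q.
Proof. intro H. exists p. split; [exact H | apply rank_le_refl]. Qed.

Lemma rank_le_of_sub p q : (forall p', R p' p -> R p' q) -> rank_le p q.
Proof.
  intro H. constructor. intros p' Hp'. exists p'. split; [exact (H p' Hp') | apply rank_le_refl].
Qed.

Lemma rank_lt_wf : well_founded rank_lt.
Proof.
  enough (H : forall q p, rank_le p q -> Acc rank_lt p)
    by (intro p; exact (H p p (rank_le_refl p))).
  intro q. induction q as [q IH] using (well_founded_induction Rwf).
  intros p Hpq. constructor. intros p' [p'' [Hp'' Hp'p'']].
  destruct (rank_le_inv _ _ Hpq p'' Hp'') as [q' [Hq' Hp''q']].
  exact (IH q' Hq' p' (rank_le_trans _ _ _ Hp'p'' Hp''q')).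
Qed.

Lemma rank_le_or_gt p q : rank_le p q \/ rank_lt q p.
Proof.
  revert q. induction p as [p IH] using (well_founded_induction Rwf). intro q.
  destruct (classic (rank_le p q)) as [H|H]; [left; exact H | right].
  assert (Hex : exists p', R p' p /\ forall q', R q' q -> ~ rank_le p' q').
  { apply NNPP. intro Hn. apply H. constructor. intros p' Hp'. apply NNPP. intro Hx.
    apply Hn. exists p'. split; [exact Hp'|]. intros q' Hq' Hle. apply Hx. eauto. }
  destruct Hex as [p' [Hp' Hno]]. exists p'. split; [exact Hp'|].
  constructor. intros q' Hq'. destruct (IH p' Hp' q') as [Hle|[r [Hr Hle]]].
  - exfalso. exact (Hno q' Hq' Hle).
  - exists r. auto.
Qed.

Lemma rank_min {I : Type} (h : I -> A) (i0 : I) : exists i, forall j, rank_le (h i) (h j).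
Proof.
  destruct (wf_minimal rank_lt (fun p => exists i, p = h i) rank_lt_wf
              (ex_intro _ (h i0) (ex_intro _ i0 eq_refl))) as [p [[i ->] Hmin]].
  exists i. intro j. destruct (rank_le_or_gt (h i) (h j)) as [H|H]; [exact H|].
  exfalso. exact (Hmin (h j) (ex_intro _ j eq_refl) H).
Qed.

Lemma rank_le_map (g : A -> A) :
  (forall p p', R p' p -> rank_lt (g p') (g p)) -> forall p, rank_le p (g p).
Proof.
  intros Hg p. induction p as [p IH] using (well_founded_induction Rwf).
  constructor. intros p' Hp'. destruct (Hg p p' Hp') as [q [Hq Hle]].
  exists q. split; [exact Hq|]. exact (rank_le_trans _ _ _ (IH p' Hp') Hle).
Qed.

End Rank.

Definition add_top {A : Type} (R : A -> A -> Prop) (o' o : option A) : Prop :=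
  match o', o with
  | Some p', Some p => R p' p
  | Some _, None => True
  | None, _ => False
  end.

Lemma add_top_wf {A : Type} (R : A -> A -> Prop) : well_founded R -> well_founded (add_top R).
Proof.
  intro Hwf.
  assert (HSome : forall p, Acc (add_top R) (Some p)).
  { intro p. induction p as [p IH] using (well_founded_induction Hwf).
    constructor. intros [p'|] H; [exact (IH p' H) | destruct H]. }
  intros [p|]; [apply HSome|]. constructor. intros [p'|] H; [apply HSome | destruct H].
Qed.

Definition image_rel {A B : Type} (e : A -> B) (R : A -> A -> Prop) (b' b : B) : Prop :=
  exists a' a, b' = e a' /\ b = e a /\ R a' a.

Lemma image_rel_wf {A B : Type} (e : A -> B) (R : A -> A -> Prop) :
  injective e -> well_founded R -> well_founded (image_rel e R).
Proof.
  intros He Hwf. apply (wf_simulation _ _ R (fun b a => b = e a) _ Hwf).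
  - intros b b' [a' [a [-> _]]]. eauto.
  - intros b b' a [a1' [a1 [-> [-> H]]]] Hb. apply He in Hb. subst. eauto.
Qed.

Lemma uncountable_list_miss {A : Type} :
  uncountable A -> forall l : list A, exists x, ~ In x l.
Proof.
  intros Hunc l. apply NNPP. intro Hn. apply Hunc.
  assert (Hall : forall x, exists n, nth_error l n = Some x).
  { intro x. apply In_nth_error. apply NNPP. intro Hx. apply Hn. eauto. }
  destruct (choice _ Hall) as [idx Hidx]. exists idx.
  intros x y H. pose proof (Hidx x) as Hx. rewrite H, Hidx in Hx. congruence.
Qed.

Lemma nat_injection_avoiding {A : Type} (m : A) :
  (forall l : list A, exists x, ~ In x l) -> exists d : nat -> A, injective d /\ forall n, d n <> m.
Proof.
  intro Hmiss. destruct (choice _ Hmiss) as [fresh Hfresh].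
  pose (L := fix L n := match n with O => m :: nil | S k => fresh (L k) :: L k end).
  assert (Hm : forall n, In m (L n)) by (induction n; simpl; auto).
  assert (Hlater : forall i k, i < k -> In (fresh (L i)) (L k)).
  { intros i k. induction k as [|k IH]; intro Hik; [lia|]. simpl.
    destruct (Nat.eq_dec i k) as [->|Hne]; [left; reflexivity | right; apply IH; lia]. }
  exists (fun n => fresh (L n)). split.
  - intros i k Heq. destruct (Nat.lt_trichotomy i k) as [H|[H|H]]; [|exact H|]; exfalso.
    + apply (Hfresh (L k)). rewrite <- Heq. exact (Hlater i k H).
    + apply (Hfresh (L i)). rewrite Heq. exact (Hlater k i H).
  - intros n Hn. apply (Hfresh (L n)). rewrite Hn. apply Hm.
Qed.

Lemma hilbert_hotel {A : Type} (m : A) (d : nat -> A) :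
  injective d -> (forall n, d n <> m) -> exists j : A -> A, injective j /\ forall x, j x <> m.
Proof.
  intros Hd Hdm.
  assert (Hj : forall x, exists y, (x = m /\ y = d 0) \/ (exists n, x = d n /\ y = d (S n))
                              \/ (x <> m /\ (forall n, x <> d n) /\ y = x)).
  { intro x. destruct (classic (x = m)) as [->|Hm]; [eauto|].
    destruct (classic (exists n, x = d n)) as [[n ->]|Hn]; [eauto 6|].
    exists x. right; right. split; [exact Hm|]. split; [|reflexivity]. intros n ->. eauto. }
  destruct (choice _ Hj) as [j Hspec]. exists j. split.
  - intros x y Hxy.
    destruct (Hspec x) as [[-> Ex]|[[n [-> Ex]]|[Hxm [Hxd Ex]]]];
    destruct (Hspec y) as [[-> Ey]|[[k [-> Ey]]|[Hym [Hyd Ey]]]];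
    rewrite Ex in Hxy; rewrite ?Ey in Hxy;
    try (apply Hd in Hxy; congruence); subst; firstorder congruence.
  - intros x Hx. destruct (Hspec x) as [[_ E]|[[n [_ E]]|[Hxm [_ E]]]]; rewrite E in Hx.
    + exact (Hdm 0 Hx).
    + exact (Hdm (S n) Hx).
    + exact (Hxm Hx).
Qed.

Lemma injective_left_inverse {A B : Type} (i : A -> B) (a0 : A) :
  injective i -> exists r : B -> A, forall a, r (i a) = a.
Proof.
  intro Hi. assert (H : forall b, exists a, (exists a', i a' = b) -> i a = b).
  { intro b. destruct (classic (exists a', i a' = b)) as [[a' Ha']|Hn]; [exists a'; auto|].
    exists a0. intro Hx. contradiction. }
  destruct (choice _ H) as [r Hr]. exists r. intro a. apply Hi. apply Hr. eauto.
Qed.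

Section Cardinal.
Context {K : Type} (lt : K -> K -> Prop).
Hypothesis (Hwo : is_wellorder lt) (Hseg : forall a, ~ exists f : K -> seg lt a, injective f)
  (Hunc : uncountable K).

Lemma lt_wf : well_founded lt.
Proof. exact (proj1 Hwo). Qed.

Lemma lt_trans a b c : lt a b -> lt b c -> lt a c.
Proof. exact (proj1 (proj2 Hwo) a b c). Qed.

Lemma lt_trichotomy a b : lt a b \/ a = b \/ lt b a.
Proof. exact (proj2 (proj2 Hwo) a b). Qed.

Lemma lt_irrefl a : ~ lt a a.
Proof. exact (Acc_irrefl lt a (lt_wf a)). Qed.

Lemma K_inhabited : inhabited K.
Proof. destruct (uncountable_list_miss Hunc nil) as [x _]. exact (inhabits x). Qed.

Lemma no_greatest a : exists b, lt a b.
Proof.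
  apply NNPP. intro Hn.
  destruct (nat_injection_avoiding a (uncountable_list_miss Hunc)) as [d [Hd Hda]].
  destruct (hilbert_hotel a d Hd Hda) as [j [Hj Hja]].
  assert (Hlt : forall x, lt (j x) a).
  { intro x. destruct (lt_trichotomy (j x) a) as [H|[H|H]]; [exact H | |]; exfalso.
    - exact (Hja x H).
    - exact (Hn (ex_intro _ (j x) H)). }
  apply (Hseg a). exists (fun x => exist _ (j x) (Hlt x)).
  intros x y Hxy. apply Hj. exact (f_equal (@proj1_sig _ _) Hxy).
Qed.

Lemma omega_below : exists (w : K) (j : nat -> K), injective j /\ forall n, lt (j n) w.
Proof.
  destruct K_inhabited as [k0].
  destruct (wf_minimal lt (fun _ => True) lt_wf (ex_intro _ k0 I)) as [e0 [_ He0]].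
  assert (Hsucc : forall a, exists s, lt a s /\ forall y, lt a y -> ~ lt y s).
  { intro a. destruct (wf_minimal lt (lt a) lt_wf (no_greatest a)) as [s Hs]. eauto. }
  destruct (choice _ Hsucc) as [succ Hsucc'].
  pose (e := fix e n := match n with O => e0 | S n => succ (e n) end).
  assert (Hinc : forall n k, n < k -> lt (e n) (e k)).
  { intros n k. induction k as [|k IH]; intro Hnk; [lia|].
    assert (Hstep : lt (e k) (e (S k))) by exact (proj1 (Hsucc' (e k))).
    destruct (Nat.eq_dec n k) as [->|Hne]; [exact Hstep|].
    exact (lt_trans _ _ _ (IH ltac:(lia)) Hstep). }
  assert (He : injective e).
  { intros n k Heq. destruct (Nat.lt_trichotomy n k) as [H|[H|H]]; [|exact H|];
      exfalso; apply (lt_irrefl (e n)); [rewrite Heq at 2 | rewrite Heq at 1]; apply Hinc, H. }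
  destruct (classic (exists w, forall n, lt (e n) w)) as [[w Hw]|Hunb]; [eauto|].
  (* Otherwise [e] enumerates all of [K]. *)
  exfalso. apply Hunc.
  assert (Hcof : forall x, exists n, ~ lt (e n) x).
  { intro x. apply NNPP. intro Hx. apply Hunb. exists x. intro n.
    apply NNPP. intro H. apply Hx. eauto. }
  assert (Henum : forall n x, ~ lt (e n) x -> exists k, x = e k).
  { intro n. induction n as [|n IH]; intros x Hx.
    - destruct (lt_trichotomy x e0) as [H|[H|H]]; [| exists 0; exact H | contradiction].
      exfalso. exact (He0 x I H).
    - destruct (lt_trichotomy x (e (S n))) as [H|[H|H]]; [| exists (S n); exact H | contradiction].
      apply IH. intro Hnx. exact (proj2 (Hsucc' (e n)) x Hnx H). }
  assert (Hidx : forall x, exists k, x = e k) by (intro x; destruct (Hcof x) as [n Hn]; eauto).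
  destruct (choice _ Hidx) as [idx Hidx']. exists idx.
  intros x y H. rewrite (Hidx' x), (Hidx' y), H. reflexivity.
Qed.

Lemma code_injection : exists c : bool * bool -> K, injective c.
Proof.
  destruct omega_below as [_ [j [Hj _]]].
  exists (fun pq => j (Nat.b2n (fst pq) + 2 * Nat.b2n (snd pq))).
  intros [[] []] [[] []] H; apply Hj in H; simpl in H; congruence.
Qed.

Definition in_nbhd (t : short_seqs lt) (y : K -> K) : Prop :=
  forall b (H : lt b (projT1 t)), y b = projT2 t (exist _ b H).

Definition extends (t' t : short_seqs lt) : Prop :=
  forall b (H : lt b (projT1 t)), exists H' : lt b (projT1 t'),
    projT2 t' (exist _ b H') = projT2 t (exist _ b H).

Definition restr (x : K -> K) (d : K) : short_seqs lt :=
  existT (fun a => seg lt a -> K) d (fun b => x (proj1_sig b)).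

Lemma extends_refl t : extends t t.
Proof. intros b H. exists H. reflexivity. Qed.

Lemma extends_trans t1 t2 t3 : extends t1 t2 -> extends t2 t3 -> extends t1 t3.
Proof.
  intros X12 X23 b H. destruct (X23 b H) as [H' E1]. destruct (X12 b H') as [H'' E2].
  exists H''. rewrite E2. exact E1.
Qed.

Lemma extends_restr x d d' : lt d d' -> extends (restr x d') (restr x d).
Proof. intros Hdd' b H. exists (lt_trans _ _ _ H Hdd'). reflexivity. Qed.

Lemma chain_limit (t : nat -> short_seqs lt) :
  (forall n, extends (t (S n)) (t n)) -> exists y, forall n, in_nbhd (t n) y.
Proof.
  intro Hch.
  assert (Hmono : forall n m, n <= m -> extends (t m) (t n)).
  { intros n m Hnm. induction Hnm as [|m _ IH]; [apply extends_refl|].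
    exact (extends_trans _ _ _ (Hch m) IH). }
  assert (Hy : forall b, exists v,
             forall n (H : lt b (projT1 (t n))), v = projT2 (t n) (exist _ b H)).
  { intro b. destruct (classic (exists n, lt b (projT1 (t n)))) as [[n Hn]|Hno].
    - exists (projT2 (t n) (exist _ b Hn)). intros m Hm.
      destruct (Nat.le_ge_cases n m) as [Hnm|Hmn].
      + destruct (Hmono n m Hnm b Hn) as [H' Heq]. rewrite <- Heq.
        f_equal. f_equal. apply proof_irrelevance.
      + destruct (Hmono m n Hmn b Hm) as [H' Heq]. rewrite <- Heq.
        f_equal. f_equal. apply proof_irrelevance.
    - exists b. intros n Hn. exfalso. eauto. }
  destruct (choice _ Hy) as [y Hy']. exists y. intros n b H. apply Hy'.
Qed.

Section Power.
Context (E : short_seqs lt -> K) (E_inj : injective E).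

Lemma nat_seq_injection : exists Phi : (nat -> K) -> K, injective Phi.
Proof.
  destruct omega_below as [w [j [Hj Hw]]].
  destruct (injective_left_inverse j 0 Hj) as [r Hr].
  exists (fun h => E (existT (fun a => seg lt a -> K) w (fun b => h (r (proj1_sig b))))).
  intros h1 h2 H. apply E_inj, inj_pairT2 in H.
  extensionality n. rewrite <- (Hr n).
  exact (f_equal (fun g => g (exist _ (j n) (Hw n))) H).
Qed.

(* [kappa ^ omega <= kappa] gives [cf kappa > omega], by Koenig's diagonal argument. *)
Lemma countable_bounded (s : nat -> K) : exists b, forall n, lt (s n) b.
Proof.
  apply NNPP. intro Hn.
  assert (Hcof : forall b, exists n, lt b (s n)).
  { intro b. destruct (no_greatest b) as [b' Hb'].
    apply NNPP. intro Hx. apply Hn. exists b'. intro n.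
    destruct (lt_trichotomy (s n) b') as [H|[H|H]]; [exact H | |]; exfalso; apply Hx; exists n.
    - rewrite H. exact Hb'.
    - exact (lt_trans _ _ _ Hb' H). }
  destruct nat_seq_injection as [Phi HPhi].
  assert (Hdiag : forall n, exists v, forall g, lt (Phi g) (s n) -> g n <> v).
  { intro n. apply NNPP. intro Hx.
    assert (Hall : forall v, exists g, lt (Phi g) (s n) /\ g n = v).
    { intro v. apply NNPP. intro Hv. apply Hx. exists v. intros g Hg Hgv. apply Hv. eauto. }
    destruct (choice _ Hall) as [G HG].
    apply (Hseg (s n)). exists (fun v => exist _ (Phi (G v)) (proj1 (HG v))).
    intros v v' Hvv. apply (f_equal (@proj1_sig _ _)), HPhi in Hvv. simpl in Hvv.
    rewrite <- (proj2 (HG v)), <- (proj2 (HG v')), Hvv. reflexivity. }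
  destruct (choice _ Hdiag) as [h Hh].
  destruct (Hcof (Phi h)) as [n Hnn].
  exact (Hh n h Hnn eq_refl).
Qed.

Lemma upper_bound2 a b : exists c, lt a c /\ lt b c.
Proof.
  destruct (countable_bounded (fun n => match n with O => a | _ => b end)) as [c Hc].
  exists c. split; [exact (Hc 0) | exact (Hc 1)].
Qed.

Lemma node_injection : exists emb : option (K * short_seqs lt) -> K, injective emb.
Proof.
  destruct nat_seq_injection as [Phi HPhi].
  destruct K_inhabited as [k0]. destruct (no_greatest k0) as [k1 Hk01].
  exists (fun o => match o with
           | Some (a, t) => Phi (fun n => match n with O => a | 1 => E t | _ => k0 end)
           | None => Phi (fun _ => k1)
           end).
  assert (Hk : k0 <> k1) by (intros ->; exact (lt_irrefl _ Hk01)).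
  intros [[a t]|] [[a' t']|] H; apply HPhi in H; try reflexivity.
  - pose proof (f_equal (fun g => g 0) H) as H0. pose proof (f_equal (fun g => g 1) H) as H1.
    simpl in H0, H1. apply E_inj in H1. subst. reflexivity.
  - exfalso. exact (Hk (f_equal (fun g => g 2) H)).
  - exfalso. exact (Hk (eq_sym (f_equal (fun g => g 2) H))).
Qed.

Section Coding.
Context (c : bool * bool -> K) (c_inj : injective c).

Definition truth (P : Prop) : bool := if excluded_middle_informative P then true else false.

Lemma truth_true P : truth P = true <-> P.
Proof. unfold truth. destruct (excluded_middle_informative P); split; congruence || tauto. Qed.

Definition entry (z : K -> K) (u l v : K) : Prop :=
  exists g : seg lt u -> K, z u = E (existT _ u g) /\ exists H : lt l u, g (exist _ l H) = v.

(* [enc R] puts [c (R l u, R u l)] at position [l < u] of the sequence coded by [u];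
   [coded_rel] reads [R b a] off the larger of [a] and [b]. *)
Definition coded_rel (z : K -> K) (b a : K) : Prop :=
  (exists q, entry z a b (c (true, q))) \/ (exists p, entry z b a (c (p, true))).

Definition enc (R : K -> K -> Prop) (u : K) : K :=
  E (existT _ u (fun l : seg lt u =>
       c (truth (R (proj1_sig l) u), truth (R u (proj1_sig l))))).

Lemma entry_enc R u l v : entry (enc R) u l v -> v = c (truth (R l u), truth (R u l)).
Proof.
  intros [g [Hg [H <-]]]. apply E_inj, inj_pairT2 in Hg. rewrite <- Hg. reflexivity.
Qed.

Lemma enc_entry R u l : lt l u -> entry (enc R) u l (c (truth (R l u), truth (R u l))).
Proof. intro H. eexists. split; [reflexivity|]. exists H. reflexivity. Qed.

Lemma enc_sound R b a : coded_rel (enc R) b a -> R b a.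
Proof.
  intros [[q H]|[p H]]; apply entry_enc, c_inj in H; injection H as H1 H2; apply truth_true;
    congruence.
Qed.

Lemma enc_complete R b a : b <> a -> R b a -> coded_rel (enc R) b a.
Proof.
  intros Hne HR. apply truth_true in HR.
  destruct (lt_trichotomy b a) as [H|[H|H]]; [left | contradiction | right].
  - exists (truth (R a b)). pose proof (enc_entry R a b H) as He. rewrite HR in He. exact He.
  - exists (truth (R a b)). pose proof (enc_entry R b a H) as He. rewrite HR in He. exact He.
Qed.

Lemma coded_rel_agree a z y b b' :
  agree_below lt a z y -> lt b a -> lt b' a -> coded_rel z b b' -> coded_rel y b b'.
Proof.
  intros Hag Hb Hb'.
  assert (Hentry : forall u l v, lt u a -> entry z u l v -> entry y u l v).
  { intros u l v Hu [g [Hg Hv]]. exists g. split; [rewrite <- Hag; assumption | exact Hv]. }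
  intros [[q H]|[p H]]; [left | right]; eauto.
Qed.

Lemma coded_rel_open b a : kopen lt (fun z => coded_rel z b a).
Proof.
  intros z Hz. destruct (upper_bound2 b a) as [d [Hb Ha]].
  exists d. intros y Hag. exact (coded_rel_agree d z y b a Hag Hb Ha Hz).
Qed.

Definition codes_wf (z : K -> K) : Prop :=
  forall a, well_founded (fun u v : seg lt a => coded_rel z (proj1_sig u) (proj1_sig v)).

Lemma codes_wf_closed : kclosed lt codes_wf.
Proof.
  intros z Hz. apply not_all_ex_not in Hz. destruct Hz as [a Ha].
  exists a. intros y Hag Hy. apply Ha.
  apply (wf_incl _ _ (fun u v : seg lt a => coded_rel y (proj1_sig u) (proj1_sig v)));
    [|exact (Hy a)].
  intros u v. apply (coded_rel_agree a z y);
    [exact Hag | exact (proj2_sig u) | exact (proj2_sig v)].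
Qed.

Lemma codes_wf_enc R : well_founded R -> codes_wf (enc R).
Proof.
  intros Hwf a. apply (wf_incl _ _ (fun u v => R (proj1_sig u) (proj1_sig v))).
  - intros u v. apply enc_sound.
  - exact (wf_inverse_image _ _ R (@proj1_sig _ _) Hwf).
Qed.

Section ContinuousImage.
Context (f : (K -> K) -> (K -> K)) (Hf : kcontinuous lt f) (Hf_wf : forall x, codes_wf (f x)).

Definition descent (p' p : K * short_seqs lt) : Prop :=
  extends (snd p') (snd p) /\ forall y, in_nbhd (snd p') y -> coded_rel (f y) (fst p') (fst p).

(* An infinite descent would converge to some [y] whose coded relation is ill-founded
   below a bound of the first coordinates, which exists since [cf kappa > omega]. *)
Lemma descent_wf : well_founded descent.
Proof.
  apply wf_of_no_descending_seq. intros s Hs.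
  destruct (chain_limit (fun n => snd (s n)) (fun n => proj1 (Hs n))) as [y Hy].
  destruct (countable_bounded (fun n => fst (s n))) as [B HB].
  apply (wf_no_descending_seq _ (fun n => exist _ (fst (s n)) (HB n)) (Hf_wf y B)).
  intro n. exact (proj2 (Hs n) y (Hy (S n))).
Qed.

Lemma rank_le_restr x a d d' :
  lt d d' -> rank_le descent (a, restr x d') (a, restr x d).
Proof.
  intro Hdd'. apply (rank_le_of_sub _ descent_wf). intros p' [Hext Hp']. split; [|exact Hp'].
  exact (extends_trans _ _ _ Hext (extends_restr x d d' Hdd')).
Qed.

Lemma descent_rank_embedding x :
  exists h : K -> K * short_seqs lt,
    forall b a, coded_rel (f x) b a -> rank_lt descent (h b) (h a).
Proof.
  destruct K_inhabited as [k0].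
  assert (Hmin : forall a, exists d, forall d', rank_le descent (a, restr x d) (a, restr x d'))
    by (intro a; exact (rank_min descent descent_wf (fun d => (a, restr x d)) k0)).
  destruct (choice _ Hmin) as [dmin Hdmin].
  exists (fun a => (a, restr x (dmin a))). intros b a Hba.
  destruct (Hf _ (coded_rel_open b a) x Hba) as [d0 Hd0].
  destruct (upper_bound2 d0 (dmin a)) as [d [Hd0d Hd]].
  apply (rank_le_lt_trans _ descent_wf _ (b, restr x d)); [apply Hdmin|].
  apply (rank_lt_le_trans _ descent_wf _ (a, restr x d)); [|exact (rank_le_restr x a _ _ Hd)].
  apply rank_lt_of_rel; [exact descent_wf|]. split; [apply extends_refl|].
  intros y Hy. apply Hd0. intros e He. symmetry. exact (Hy e (lt_trans _ _ _ He Hd0d)).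
Qed.

Lemma codes_wf_not_continuous_image : ~ (forall z, codes_wf z -> exists x, f x = z).
Proof.
  intro Hsurj.
  destruct node_injection as [emb Hemb].
  pose (R := image_rel emb (add_top descent)).
  assert (HR : well_founded R) by exact (image_rel_wf _ _ Hemb (add_top_wf _ descent_wf)).
  destruct (Hsurj (enc R) (codes_wf_enc R HR)) as [x Hx].
  destruct (descent_rank_embedding x) as [h Hh].
  assert (Hcoded : forall o' o, add_top descent o' o -> rank_lt descent (h (emb o')) (h (emb o))).
  { intros o' o Ho. apply Hh. rewrite Hx. apply enc_complete.
    - intro Heq. apply Hemb in Heq. subst.
      exact (Acc_irrefl _ _ (add_top_wf _ descent_wf o) Ho).
    - exists o', o. auto. }
  pose (top := h (emb None)).
  assert (Hraise : forall p, rank_le descent p (h (emb (Some p))))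
    by exact (rank_le_map _ descent_wf _ (fun p p' => Hcoded (Some p') (Some p))).
  apply (Acc_irrefl _ top (rank_lt_wf _ descent_wf top)).
  exact (rank_le_lt_trans _ descent_wf _ _ _ (Hraise top) (Hcoded (Some top) None I)).
Qed.

End ContinuousImage.
End Coding.
End Power.
End Cardinal.

Theorem theorem1p5 (K : Type) (lt : K -> K -> Prop)
  (Hcard : is_cardinal lt) (Hunc : uncountable K) (Hpow : kappa_lt_kappa_eq lt) :
  exists C : (K -> K) -> Prop,
    kclosed lt C /\ (exists x, C x) /\
    ~ exists f : (K -> K) -> (K -> K),
        kcontinuous lt f /\ (forall y, C y <-> exists x, f x = y).
Proof.
  destruct Hcard as [Hwo Hseg]. destruct Hpow as [E [E_inj _]].
  destruct (code_injection lt Hwo Hseg Hunc) as [c c_inj].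
  exists (codes_wf lt E c). split; [|split].
  - apply codes_wf_closed.
  - exists (enc lt E c (fun _ _ => False)).
    apply (codes_wf_enc lt E E_inj c c_inj). intro a. constructor. intros b [].
  - intros [f [Hf Himg]].
    apply (codes_wf_not_continuous_image lt Hwo Hseg Hunc E E_inj c c_inj f Hf).
    + intro x. apply Himg. eauto.
    + intros z Hz. apply Himg, Hz.
Qed.
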